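(* Let $\Gamma$ be a finitely generated group, $p$ a prime or $0$, $\mathbb F_p$ the prime field of characteristic $p$ ($\mathbb F_0=\mathbb Q$). Let $Q=\Gamma/[\Gamma,\Gamma]$, $\Gamma'=[\Gamma,\Gamma]$, $M=\Gamma'/[\Gamma',\Gamma']$ viewed as a $\mathbb Z[Q]$-module via conjugation, $M_p=M\otimes\mathbb F_p$ as an $\mathbb F_p[Q]$-module, $\mathcal J\subset\mathbb F_p[Q]$ its annihilator and $A=\mathbb F_p[Q]/\mathcal J$. For a prime ideal $\mathfrak p$ of $A$, let $k_{\mathfrak p}$ be the field of fractions of $A/\mathfrak p$ and $\xi_{\mathfrak p}:\Gamma\to Q\to A/\mathfrak p\to k_{\mathfrak p}^*$ the natural character. Let $K$ be a field of characteristic $p$, and $\chi\in E^1(\Gamma,K)$ with $\chi\ne1$; let $\varphi_\chi:\mathbb F_p[Q]\to K$ be the ring homomorphism induced by $\chi$. If $\mathfrak p$ is a minimal prime ideal of $A$ whose preimage in $\mathbb F_p[Q]$ is contained in $\ker\varphi_\chi$, then $H^1(\Gamma,\xi_{\mathfrak p})\neq 0$, i.e. $\xi_{\mathfrak p}\in E^1(\Gamma,k_{\mathfrak p})$.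
   Context: For a character $\chi:\Gamma\to K^*$, $H^1(\Gamma,\chi)$ is the first cohomology of $\Gamma$ with coefficients in $K$ twisted by $\chi$ (cocycles $\theta(gh)=\theta(g)+\chi(g)\theta(h)$ modulo coboundaries $g\mapsto\mu(\chi(g)-1)$), and $E^1(\Gamma,K)=\{\chi: H^1(\Gamma,\chi)\ne0\}$. Any character factors through $Q$ since $K^*$ is abelian. *)

From HB Require Import structures.
From mathcomp Require Import all_boot.
From mathcomp Require Import ssralg zmodp rat.
From mathcomp Require Import finmap.

Set Implicit Arguments.
Unset Strict Implicit.
Unset Printing Implicit Defensive.

Import GRing.Theory.
Local Open Scope ring_scope.

Section Groups.
Variable G : groupType.

Definition fin_generated : Prop :=
  exists S : seq G, forall x : G, exists w : seq G,
    all (fun y => (y \in S) || (y^-1 \in S))%g w /\ x = (\prod_(y <- w) y)%g.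

Definition in_derived (x : G) : Prop :=
  exists w : seq (G * G), x = (\prod_(ab <- w) [~ ab.1, ab.2])%g.

Definition is_abelianization (Q : groupType) (pi : G -> Q) : Prop :=
  [/\ forall x y : G, pi (x * y)%g = (pi x * pi y)%g,
      forall q : Q, exists x : G, pi x = q &
      forall x : G, pi x = 1%g <-> in_derived x].

(* mu : G' -> V (only its restriction to G' = [G,G] matters) exhibits   *)
(* the F-vector space V as M (x) F, where M = G'/[G',G'] (written       *)
(* additively): mu is a homomorphism from G' to (V,+), universal among  *)
(* homomorphisms from G' to F-vector spaces (universal property of      *)
(* M (x)_Z F = abelianization of G' tensored with F).                  *)
Definition hom_on_derived (F : fieldType) (W : lmodType F) (nu : G -> W) :=
  forall x y : G, in_derived x -> in_derived y -> nu (x * y)%g = nu x + nu y.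

Definition is_linear (F : fieldType) (U W : lmodType F) (f : U -> W) :=
  forall (a : F) (u v : U), f (a *: u + v) = a *: f u + f v.

Definition is_Mp (F : fieldType) (V : lmodType F) (mu : G -> V) : Prop :=
  hom_on_derived mu /\
  forall (W : lmodType F) (nu : G -> W), hom_on_derived nu ->
    exists f : V -> W,
      [/\ is_linear f, forall x, in_derived x -> f (mu x) = nu x &
          forall f' : V -> W, is_linear f' ->
            (forall x, in_derived x -> f' (mu x) = nu x) -> forall v, f' v = f v].

Definition is_Mp_action (F : fieldType) (Q : groupType) (pi : G -> Q)
    (V : lmodType F) (mu : G -> V) (act : Q -> V -> V) : Prop :=
  (forall q, is_linear (act q)) /\
  forall g x : G, in_derived x -> act (pi g) (mu x) = mu (g * x * g^-1)%g.

End Groups.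

Section GroupAlgebra.
Variables (F : fieldType) (Q : groupType).

Definition galg := {fsfun Q -> F with 0}.


Definition gzero : galg := [fsfun x in fset0%fset => (0 : F)%R].
Definition gdelta (q : Q) : galg := [fsfun x in [fset q]%fset => (1 : F)%R].
Definition gone : galg := gdelta 1%g.
Definition gadd (f g : galg) : galg :=
  [fsfun x in (finsupp f `|` finsupp g)%fset => (f x + g x)%R].
Definition gmul (f g : galg) : galg :=
  [fsfun x in [fset (a * b)%g | a in finsupp f, b in finsupp g]%fset =>
     (\sum_(a <- finsupp f) f a * g (a^-1 * x)%g)%R].

Definition is_ideal (I : galg -> Prop) : Prop :=
  [/\ I gzero, forall f g, I f -> I g -> I (gadd f g) &
      forall r f, I f -> I (gmul r f)].

Definition is_prime_ideal (I : galg -> Prop) : Prop :=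
  [/\ is_ideal I, ~ I gone & forall f g, I (gmul f g) -> I f \/ I g].

(* P is a minimal prime ideal over J, i.e. P/J is a minimal prime ideal *)
(* of F[Q]/J (P is the preimage of that prime in F[Q]).                *)
Definition minimal_prime_over (J P : galg -> Prop) : Prop :=
  [/\ is_prime_ideal P, (forall f, J f -> P f) &
      forall P' : galg -> Prop, is_prime_ideal P' -> (forall f, J f -> P' f) ->
        (forall f, P' f -> P f) -> forall f, P f -> P' f].

Definition galg_rmorph (R : nzRingType) (psi : galg -> R) : Prop :=
  [/\ forall f g, psi (gadd f g) = psi f + psi g,
      forall f g, psi (gmul f g) = psi f * psi g &
      psi gone = 1].

Definition annihilator (V : lmodType F) (act : Q -> V -> V) (f : galg) : Prop :=
  forall v : V, \sum_(q <- finsupp f) f q *: act q v = 0.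

End GroupAlgebra.

Definition Fp (p : nat) : fieldType := if p is 0 then (rat : fieldType) else ('F_p : fieldType).

Definition has_char (K : fieldType) (p : nat) : Prop :=
  forall n : nat, (n%:R == 0 :> K) = (p %| n)%N.

Section Cohomology.
Variables (G : groupType) (K : fieldType).

Definition is_character (chi : G -> K) : Prop :=
  chi 1%g = 1 /\ forall x y : G, chi (x * y)%g = chi x * chi y.

Definition cocycle (chi theta : G -> K) : Prop :=
  forall g h : G, theta (g * h)%g = theta g + chi g * theta h.

Definition coboundary (chi theta : G -> K) : Prop :=
  exists m : K, forall g : G, theta g = m * (chi g - 1).

Definition H1_nonzero (chi : G -> K) : Prop :=
  exists theta : G -> K, cocycle chi theta /\ ~ coboundary chi theta.

Definition in_E1 (chi : G -> K) : Prop := is_character chi /\ H1_nonzero chi.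

End Cohomology.

(* Since P contains Ann(M_p), the finitely generated F_p[Q]-module M_p does not
   vanish at P: an induction on generators in the style of Nakayama's lemma
   yields a nonzero map lam : M_p -> k_P that is semilinear along
   psi : F_p[Q] -> k_P, i.e. lam (x ^ g) = xi(g)^-1 lam x on [G,G].  Moreover
   xi <> 1, because xi(g) = 1 for all g would put every delta_q - 1 into
   P, which lies in ker phi_chi, forcing chi = 1.  Choosing a with xi(a) <> 1,
   theta(g) = xi(g) lam [g, a] is a xi-cocycle, and it is not a coboundary
   since it does not vanish on [G,G] while xi - 1 does. *)
Set Warnings "-notation-overridden,-ambiguous-paths,-notation-incompatible-prefix".
From HB Require Import structures.
From mathcomp Require Import all_boot.
From mathcomp Require Import ssralg zmodp rat.
From mathcomp Require Import finmap.
From Stdlib Require Import Classical ClassicalEpsilon.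
Import GRing.Theory.
Local Open Scope ring_scope.
Set Implicit Arguments.
Unset Strict Implicit.
Unset Printing Implicit Defensive.

Section GroupAlgebra.
Variables (F : fieldType) (Q : groupType).
Local Notation R := (galg F Q).

Lemma gzeroE x : gzero F Q x = 0.
Proof. by rewrite /gzero fsfunE. Qed.

Lemma gaddE (f g : R) x : gadd f g x = f x + g x.
Proof.
rewrite /gadd fsfunE; case: ifP => // /negbT.
by rewrite in_fsetU negb_or => /andP[fx gx]; rewrite !fsfun_dflt // addr0.
Qed.

Lemma gdeltaE (q x : Q) : gdelta F q x = (x == q)%:R.
Proof. by rewrite /gdelta fsfunE in_fset1; case: eqP. Qed.

Lemma gmulE (f g : R) x :
  gmul f g x = \sum_(a <- finsupp f) f a * g (a^-1 * x)%g.
Proof.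
rewrite /gmul fsfunE; case: ifP => // /negbT xN.
rewrite big_seq big1 // => a af.
have [ga|/fsfun_dflt -> ] := boolP ((a^-1 * x)%g \in finsupp g); last by rewrite mulr0.
case/negP: xN; apply/imfset2P; exists a => //; exists (a^-1 * x)%g => //.
by rewrite mulVKg.
Qed.

Definition gopp (f : R) : R := [fsfun x in finsupp f => - f x].

Lemma goppE (f : R) x : gopp f x = - f x.
Proof.
by rewrite /gopp fsfunE; case: ifP => // /negbT fx; rewrite fsfun_dflt // oppr0.
Qed.

Lemma finsupp_gdelta (q : Q) : finsupp (gdelta F q) = [fset q]%fset.
Proof.
apply/fsetP => x; rewrite mem_finsupp gdeltaE in_fset1.
by case: (x == q); rewrite ?oner_neq0 ?eqxx.
Qed.

Lemma gdeltaM (q r : Q) : gmul (gdelta F q) (gdelta F r) = gdelta F (q * r)%g.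
Proof.
apply/fsfunP => x; rewrite gmulE finsupp_gdelta big_seq_fset1 !gdeltaE eqxx mul1r.
suff -> : ((q^-1 * x)%g == r) = (x == (q * r)%g) by [].
by apply/eqP/eqP => [<-|->]; [rewrite mulVKg | rewrite mulKg].
Qed.

Lemma gaddN (f : R) : gadd f (gopp f) = gzero F Q.
Proof. by apply/fsfunP => x; rewrite gaddE goppE gzeroE subrr. Qed.

Lemma gadd00 : gadd (gzero F Q) (gzero F Q) = gzero F Q.
Proof. by apply/fsfunP => x; rewrite gaddE gzeroE addr0. Qed.

Section Morphism.
Variables (S : nzRingType) (psi : R -> S).
Hypothesis psi_rmorph : galg_rmorph psi.

Lemma galg_rmorphD f g : psi (gadd f g) = psi f + psi g.
Proof. by case: psi_rmorph. Qed.

Lemma galg_rmorphM f g : psi (gmul f g) = psi f * psi g.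
Proof. by case: psi_rmorph. Qed.

Lemma galg_rmorph1 : psi (gone F Q) = 1.
Proof. by case: psi_rmorph. Qed.

Lemma galg_rmorph0 : psi (gzero F Q) = 0.
Proof.
apply: (@addrI _ (psi (gzero F Q))).
by rewrite -galg_rmorphD gadd00 addr0.
Qed.

Lemma galg_rmorphN f : psi (gopp f) = - psi f.
Proof.
by apply/eqP; rewrite -addr_eq0 addrC -galg_rmorphD gaddN galg_rmorph0.
Qed.

End Morphism.
End GroupAlgebra.

Lemma ker_subset_delta_eq1 (F : fieldType) (Q : groupType) (S T : nzRingType)
    (phi : galg F Q -> S) (psi : galg F Q -> T) (q : Q) :
  galg_rmorph phi -> galg_rmorph psi -> (forall f, psi f = 0 -> phi f = 0) ->
  psi (gdelta F q) = 1 -> phi (gdelta F q) = 1.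
Proof.
move=> phi_rm psi_rm ker_sub psi_q.
have : psi (gadd (gdelta F q) (gopp (gone F Q))) = 0.
  by rewrite galg_rmorphD // galg_rmorphN // galg_rmorph1 // psi_q subrr.
move/ker_sub; rewrite galg_rmorphD // galg_rmorphN // galg_rmorph1 //.
by move/eqP; rewrite subr_eq0 => /eqP.
Qed.

Lemma is_linearD (F : fieldType) (U W : lmodType F) (f : U -> W) :
  is_linear f -> forall u v, f (u + v) = f u + f v.
Proof. by move=> f_lin u v; rewrite -[u in LHS]scale1r f_lin scale1r. Qed.

Section GroupAlgebraAction.
Variables (F : fieldType) (Q : groupType) (V : lmodType F) (act : Q -> V -> V).
Hypothesis act_linear : forall q, is_linear (act q).
Hypothesis actM : forall q r v, act q (act r v) = act (q * r)%g v.
Hypothesis act1 : forall v, act 1%g v = v.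
Local Notation R := (galg F Q).

Lemma actD q u v : act q (u + v) = act q u + act q v.
Proof. exact: is_linearD. Qed.

Lemma act0 q : act q 0 = 0.
Proof. by apply: (@addrI _ (act q 0)); rewrite -actD !addr0. Qed.

Lemma actZ q k u : act q (k *: u) = k *: act q u.
Proof. by rewrite -[k *: u]addr0 act_linear act0 addr0. Qed.

Lemma act_sum q (I : Type) (r : seq I) (Fn : I -> V) :
  act q (\sum_(i <- r) Fn i) = \sum_(i <- r) act q (Fn i).
Proof. exact: (big_morph (act q) (actD q) (act0 q)). Qed.

(* [annihilator act a] unfolds to [forall v, gact a v = 0]. *)
Definition gact (a : R) (v : V) := \sum_(q <- finsupp a) a q *: act q v.

Lemma gact_supp (a : R) (S : {fset Q}) v :
  (forall q, a q != 0 -> q \in S) -> gact a v = \sum_(q <- S) a q *: act q v.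
Proof.
move=> aS; apply: big_fset_incl.
  by apply/fsubsetP => q; rewrite mem_finsupp => /aS.
by move=> x _; rewrite mem_finsupp negbK => /eqP ->; rewrite scale0r.
Qed.

Lemma gactDr a u v : gact a (u + v) = gact a u + gact a v.
Proof.
by rewrite /gact -big_split /=; apply: eq_bigr => q _; rewrite actD scalerDr.
Qed.

Lemma gact0r a : gact a 0 = 0.
Proof. by rewrite /gact big1 // => q _; rewrite act0 scaler0. Qed.

Lemma gact_linear a : is_linear (gact a).
Proof.
move=> k u v; rewrite gactDr /gact scaler_sumr; congr (_ + _).
by apply: eq_bigr => q _; rewrite actZ !scalerA mulrC.
Qed.

Lemma gact0l v : gact (gzero F Q) v = 0.
Proof. by rewrite /gact big1 // => q _; rewrite gzeroE scale0r. Qed.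

Lemma gactDl a b v : gact (gadd a b) v = gact a v + gact b v.
Proof.
pose S := (finsupp a `|` finsupp b)%fset.
have inS (c : R) : (finsupp c `<=` S)%fset -> forall q, c q != 0 -> q \in S.
  by move=> /fsubsetP cS q cq; apply: cS; rewrite mem_finsupp.
rewrite (gact_supp (S := S)); last first.
  move=> q; rewrite gaddE in_fsetU !mem_finsupp.
  by apply: contraR; rewrite negb_or !negbK => /andP[/eqP -> /eqP ->]; rewrite addr0.
rewrite (gact_supp _ (inS a (fsubsetUl _ _))) (gact_supp _ (inS b (fsubsetUr _ _))).
by rewrite -big_split /=; apply: eq_bigr => q _; rewrite gaddE scalerDl.
Qed.

Lemma gactNl a v : gact (gopp a) v = - gact a v.
Proof.
rewrite (gact_supp (S := finsupp a)); last by move=> q; rewrite goppE oppr_eq0 mem_finsupp.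
by rewrite /gact -sumrN; apply: eq_bigr => q _; rewrite goppE scaleNr.
Qed.

Lemma gact_delta q v : gact (gdelta F q) v = act q v.
Proof. by rewrite /gact finsupp_gdelta big_seq_fset1 gdeltaE eqxx scale1r. Qed.

Lemma gact1l v : gact (gone F Q) v = v.
Proof. by rewrite /gone gact_delta act1. Qed.

Lemma gactMl a b v : gact (gmul a b) v = gact a (gact b v).
Proof.
rewrite (gact_supp (S := [fset (c * d)%g | c in finsupp a, d in finsupp b]%fset));
  last by move=> x; rewrite /gmul fsfunE; case: ifP => //; rewrite eqxx.
under eq_bigr do rewrite gmulE scaler_suml.
rewrite exchange_big /= /gact big_seq [RHS]big_seq; apply: eq_bigr => c ca.
rewrite act_sum scaler_sumr.
under [RHS]eq_bigr do rewrite actZ actM scalerA.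
transitivity (\sum_(x <- [fset (c * d)%g | d in finsupp b]%fset)
                (a c * b (c^-1 * x)%g) *: act x v); last first.
  rewrite big_imfset /=; last by move=> x y _ _; apply: mulgI.
  by apply: eq_bigr => d _; rewrite mulKg.
symmetry; apply: big_fset_incl.
  by apply/fsubsetP => x /imfsetP [d /= db ->]; apply/imfset2P; exists c => //; exists d.
move=> x _ xN; have [bx|/fsfun_dflt ->] := boolP ((c^-1 * x)%g \in finsupp b).
  by case/negP: xN; apply/imfsetP; exists (c^-1 * x)%g => //; rewrite mulVKg.
by rewrite mulr0 scale0r.
Qed.

Lemma gactC a b v :
  (forall q r : Q, (q * r = r * q)%g) -> gact a (gact b v) = gact b (gact a v).
Proof.
move=> Qab; rewrite /gact.
under eq_bigr do rewrite act_sum scaler_sumr.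
under [RHS]eq_bigr do rewrite act_sum scaler_sumr.
rewrite exchange_big /=; apply: eq_bigr => d _; apply: eq_bigr => c _.
by rewrite !actZ !scalerA !actM Qab mulrC.
Qed.

Section Support.
Hypothesis Q_comm : forall q r : Q, (q * r = r * q)%g.
Variables (L : fieldType) (psi : galg F Q -> L).
Hypothesis psi_rmorph : galg_rmorph psi.

Fixpoint in_span (ws : seq V) (v : V) : Prop :=
  if ws is w :: ws then exists a u, in_span ws u /\ v = gact a w + u else v = 0.

Lemma in_span0 ws : in_span ws 0.
Proof.
by elim: ws => //= w ws IH; exists (gzero F Q), 0; rewrite gact0l addr0.
Qed.

Lemma in_spanD ws u v : in_span ws u -> in_span ws v -> in_span ws (u + v).
Proof.
elim: ws u v => [|w ws IH] u v /=; first by move=> -> ->; rewrite addr0.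
move=> [a [u1 [u1ws ->]]] [b [v1 [v1ws ->]]].
exists (gadd a b), (u1 + v1); split; first exact: IH.
by rewrite gactDl addrACA.
Qed.

Lemma in_spanZ ws a v : in_span ws v -> in_span ws (gact a v).
Proof.
elim: ws v => [|w ws IH] v /=; first by move=> ->; rewrite gact0r.
move=> [b [u [uws ->]]]; exists (gmul a b), (gact a u); split; first exact: IH.
by rewrite gactDr gactMl.
Qed.

Lemma in_spanN ws v : in_span ws v -> in_span ws (- v).
Proof. by move/(in_spanZ (gopp (gone F Q))); rewrite gactNl gact1l. Qed.

Lemma in_span_mem ws w : w \in ws -> in_span ws w.
Proof.
elim: ws => //= x ws IH; rewrite inE => /orP[/eqP ->|/IH wws].
  by exists (gone F Q), 0; rewrite gact1l addr0; split; first exact: in_span0.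
by exists (gzero F Q), w; rewrite gact0l add0r.
Qed.

Lemma in_span_subset ws0 ws v : {subset ws0 <= ws} -> in_span ws0 v -> in_span ws v.
Proof.
elim: ws0 v => [|w ws0 IH] v sub /=; first by move=> ->; exact: in_span0.
move=> [a [u [uws0 ->]]]; apply: in_spanD; first exact/in_spanZ/in_span_mem/sub/mem_head.
by apply: IH uws0 => x xws0; apply: sub; rewrite inE xws0 orbT.
Qed.

Definition semilinear_on ws (f : V -> L) :=
  forall a u v, in_span ws u -> in_span ws v -> f (gact a u + v) = psi a * f u + f v.

Lemma semilinear_on0 ws f : semilinear_on ws f -> f 0 = 0.
Proof.
move=> f_sl; have := f_sl (gone F Q) 0 0 (in_span0 ws) (in_span0 ws).
rewrite gact1l addr0 galg_rmorph1 // mul1r => f00.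
by apply: (@addrI _ (f 0)); rewrite addr0 -f00.
Qed.

Lemma semilinear_on_eq0 ws f :
  semilinear_on ws f -> {in ws, forall w, f w = 0} ->
  forall v, in_span ws v -> f v = 0.
Proof.
move=> f_sl fws; suff: forall ws0, {subset ws0 <= ws} ->
    forall v, in_span ws0 v -> f v = 0 by apply.
elim=> [|w ws0 IH] sub v /=; first by move=> ->; exact: semilinear_on0 f_sl.
have sub0 : {subset ws0 <= ws} by move=> z z0; apply: sub; rewrite inE z0 orbT.
have wws : w \in ws by apply: sub; rewrite inE eqxx.
move=> [a [u [uws ->]]]; rewrite f_sl ?(fws w wws) ?(IH sub0 u uws) ?mulr0 ?addr0 //.
- exact: in_span_mem.
- exact: in_span_subset uws.
Qed.

Definition killed_outside_ker ws :=
  exists t, psi t != 0 /\ forall v, in_span ws v -> gact t v = 0.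

Definition nonzero_semilinear ws :=
  exists f, semilinear_on ws f /\ exists v, in_span ws v /\ f v != 0.

Lemma in_span_cons_gact s w ws v :
  in_span ws (gact s w) -> in_span (w :: ws) v -> in_span ws (gact s v).
Proof.
move=> sw [a [u [uws ->]]]; rewrite gactDr gactC //.
by apply: in_spanD; apply: in_spanZ.
Qed.

Lemma killed_outside_ker_cons s w ws :
  psi s != 0 -> in_span ws (gact s w) ->
  killed_outside_ker ws -> killed_outside_ker (w :: ws).
Proof.
move=> ps sw [t [pt tws]]; exists (gmul t s).
split; first by rewrite galg_rmorphM // mulf_neq0.
by move=> v vws; rewrite gactMl; apply/tws/(in_span_cons_gact sw).
Qed.

Lemma nonzero_semilinear_cons s w ws :
  psi s != 0 -> in_span ws (gact s w) ->
  nonzero_semilinear ws -> nonzero_semilinear (w :: ws).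
Proof.
move=> ps sw [f [f_sl [v0 [v0ws fv0]]]]; have s_span := in_span_cons_gact sw.
exists (fun v => (psi s)^-1 * f (gact s v)); split.
  move=> a u v uws vws /=; rewrite gactDr gactC // f_sl; try exact: s_span.
  by rewrite mulrDr mulrCA.
exists v0; split; first by apply: in_span_subset v0ws => x xws; rewrite inE xws orbT.
rewrite -[gact s v0]addr0 f_sl ?(semilinear_on0 f_sl) ?addr0 ?mulKf //.
exact: in_span0.
Qed.

Section FreeGenerator.
Variables (w : V) (ws : seq V).
Hypothesis w_free : ~ exists s, psi s != 0 /\ in_span ws (gact s w).

Lemma coef_unique a b u u' :
  in_span ws u -> in_span ws u' -> gact a w + u = gact b w + u' -> psi a = psi b.
Proof.
move=> uws u'ws e; apply/eqP; rewrite -subr_eq0 -galg_rmorphN // -galg_rmorphD //.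
apply/negPn/negP => nz; apply: w_free; exists (gadd a (gopp b)); split => //.
have -> : gact (gadd a (gopp b)) w = u' - u.
  by rewrite gactDl gactNl; apply/eqP; rewrite subr_eq addrC addrA -e addrK.
by apply: in_spanD => //; apply: in_spanN.
Qed.

Lemma nonzero_semilinear_free : nonzero_semilinear (w :: ws).
Proof.
pose coef v a := exists u, in_span ws u /\ v = gact a w + u.
pose f v := psi (epsilon (inhabits (gzero F Q)) (coef v)).
have fE a u : in_span ws u -> f (gact a w + u) = psi a.
  move=> uws; rewrite /f; set e := epsilon _ _.
  have [u' [u'ws eq]] : coef (gact a w + u) e by apply: epsilon_spec; exists a, u.
  by apply: (coef_unique u'ws uws); rewrite -eq.
exists f; split.
  move=> a u v [b [u1 [u1ws ->]]] [c [v1 [v1ws ->]]].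
  have -> : gact a (gact b w + u1) + (gact c w + v1) =
            gact (gadd (gmul a b) c) w + (gact a u1 + v1).
    by rewrite gactDr gactDl gactMl addrACA.
  rewrite !fE ?galg_rmorphD ?galg_rmorphM //.
  by apply: in_spanD => //; apply: in_spanZ.
exists w; split; first exact/in_span_mem/mem_head.
by rewrite -[w]addr0 -{1}[w]gact1l fE ?galg_rmorph1 ?oner_neq0 //; exact: in_span0.
Qed.

End FreeGenerator.

(* A Nakayama-type dichotomy: either some element outside ker psi kills the
   span, or the span has a nonzero image in its base change along psi. *)
Lemma killed_or_nonzero_semilinear ws :
  killed_outside_ker ws \/ nonzero_semilinear ws.
Proof.
elim: ws => [|w ws IH].
  left; exists (gone F Q); split; first by rewrite galg_rmorph1 // oner_neq0.
  by move=> v /= ->; rewrite gact0r.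
have [[s [ps sw]]|w_free] := classic (exists s, psi s != 0 /\ in_span ws (gact s w)).
  case: IH => [killed|nonzero].
    by left; apply: killed_outside_ker_cons ps sw killed.
  by right; apply: nonzero_semilinear_cons ps sw nonzero.
by right; apply: nonzero_semilinear_free.
Qed.

End Support.
End GroupAlgebraAction.

Section DerivedSubgroup.
Variable G : groupType.
Local Notation der := (@in_derived G).

Lemma der1 : der 1%g.
Proof. by exists [::]; rewrite big_nil. Qed.

Lemma derM x y : der x -> der y -> der (x * y)%g.
Proof. by move=> [w ->] [w' ->]; exists (w ++ w'); rewrite big_cat. Qed.

Lemma derR x y : der [~ x, y].
Proof. by exists [:: (x, y)]; rewrite big_seq1. Qed.

Lemma derV x : der x -> der x^-1%g.
Proof.
move=> [w ->]; elim: w => [|ab w IH]; first by rewrite big_nil invg1; exact: der1.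
by rewrite big_cons invgM; apply: derM => //; rewrite invgR; apply: derR.
Qed.

Lemma derJ x y : der x -> der (x ^ y)%g.
Proof.
move=> [w ->]; exists [seq (ab.1 ^ y, ab.2 ^ y)%g | ab <- w].
by rewrite big_map conjg_prod; apply: eq_bigr => ab _; rewrite conjRg.
Qed.

Lemma commMgJ (x1 x2 y : G) : [~ x1 * x2, y]%g = ([~ x1, y] ^ x2 * [~ x2, y])%g.
Proof. by rewrite /commg /conjg !invgM !mulgA !mulgK. Qed.

Lemma commgMJ (x y1 y2 : G) : [~ x, y1 * y2]%g = ([~ x, y2] * [~ x, y1] ^ y2)%g.
Proof. by rewrite /commg /conjg !invgM !mulgA !mulgK. Qed.

End DerivedSubgroup.

Section Abelianization.
Variables (G Q : groupType) (pi : G -> Q).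
Hypothesis pi_abel : is_abelianization pi.
Local Notation der := (@in_derived G).

Lemma abel_morphM x y : pi (x * y)%g = (pi x * pi y)%g.
Proof. by case: pi_abel. Qed.

Lemma abel_surj q : exists x, pi x = q.
Proof. by case: pi_abel. Qed.

Lemma abel_der x : der x -> pi x = 1%g.
Proof. by case: pi_abel => _ _ piE /piE. Qed.

Lemma abel_morph1 : pi 1%g = 1%g.
Proof. by apply: (@mulgI _ (pi 1%g)); rewrite -abel_morphM !mulg1. Qed.

Lemma abel_morphV x : pi x^-1%g = (pi x)^-1%g.
Proof. by apply: (@mulgI _ (pi x)); rewrite -abel_morphM !mulgV abel_morph1. Qed.

Lemma abel_comm (q r : Q) : (q * r = r * q)%g.
Proof.
have [x <-] := abel_surj q; have [y <-] := abel_surj r.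
have := abel_der (derR x y); rewrite /commg /conjg !abel_morphM !abel_morphV => e.
by apply/commgP; rewrite /commg /conjg e.
Qed.

Lemma abel_character (F L : fieldType) (psi : galg F Q -> L) :
  galg_rmorph psi -> is_character (fun g => psi (gdelta F (pi g))).
Proof.
move=> psi_rm; split; first by rewrite abel_morph1 // galg_rmorph1.
by move=> x y; rewrite abel_morphM // -gdeltaM galg_rmorphM.
Qed.

End Abelianization.

Section ModuleMp.
Variables (G Q : groupType) (pi : G -> Q) (F : fieldType).
Variables (V : lmodType F) (mu : G -> V) (act : Q -> V -> V).
Hypothesis pi_abel : is_abelianization pi.
Hypothesis mu_Mp : is_Mp mu.
Hypothesis act_Mp : is_Mp_action pi mu act.
Local Notation der := (@in_derived G).

Lemma Mp_muM x y : der x -> der y -> mu (x * y)%g = mu x + mu y.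
Proof. by case: mu_Mp => muM _; apply: muM. Qed.

Lemma Mp_mu1 : mu 1%g = 0.
Proof.
by apply: (@addrI _ (mu 1%g)); rewrite -Mp_muM ?mulg1 ?addr0 //; exact: der1.
Qed.

Lemma Mp_act_linear q : is_linear (act q).
Proof. by case: act_Mp. Qed.

Lemma Mp_actJ g x : der x -> act (pi g) (mu x) = mu (g * x * g^-1)%g.
Proof. by case: act_Mp => _ actJ; apply: actJ. Qed.

Lemma Mp_muJ g x : der x -> mu (x ^ g)%g = act (pi g)^-1%g (mu x).
Proof. by move=> dx; rewrite -abel_morphV // Mp_actJ // invgK /conjg mulgA. Qed.

Lemma Mp_linear_eq (W : lmodType F) (f1 f2 : V -> W) :
  is_linear f1 -> is_linear f2 -> (forall x, der x -> f1 (mu x) = f2 (mu x)) ->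
  forall v, f1 v = f2 v.
Proof.
move=> f1_lin f2_lin f12 v; case: mu_Mp => _ /(_ W (fun x => f2 (mu x))) [].
  by move=> x y dx dy; rewrite Mp_muM // is_linearD.
by move=> f [_ _ f_uniq]; rewrite (f_uniq f1) // (f_uniq f2).
Qed.

Lemma Mp_actM q r v : act q (act r v) = act (q * r)%g v.
Proof.
have [g <-] := abel_surj pi_abel q; have [h <-] := abel_surj pi_abel r.
apply: (Mp_linear_eq (f1 := fun v => act (pi g) (act (pi h) v))).
- by move=> k u w /=; rewrite !Mp_act_linear.
- exact: Mp_act_linear.
move=> x dx /=; rewrite Mp_actJ // Mp_actJ; last first.
  have -> : (h * x * h^-1 = x ^ h^-1)%g by rewrite /conjg invgK mulgA.
  exact: derJ.
by rewrite -abel_morphM // Mp_actJ // invgM !mulgA.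
Qed.

Lemma Mp_act1 v : act 1%g v = v.
Proof.
apply: (Mp_linear_eq (f2 := id)) => //; first exact: Mp_act_linear.
by move=> x dx; rewrite -(abel_morph1 pi_abel) Mp_actJ // invg1 mulg1 mul1g.
Qed.

Lemma Mp_annihilator t :
  (forall x, der x -> gact act t (mu x) = 0) -> annihilator act t.
Proof.
move=> t_der; apply: (Mp_linear_eq (f2 := fun=> 0)) => //.
- exact/gact_linear/Mp_act_linear.
- by move=> k u w; rewrite scaler0 addr0.
Qed.

Lemma in_span_act ws q v : in_span act ws v -> in_span act ws (act q v).
Proof. by move/(in_spanZ Mp_act_linear Mp_actM (gdelta F q)); rewrite gact_delta. Qed.

Section CommutatorGenerators.
Variable T : seq G.
Let ws := [seq mu [~ x, y]%g | x <- T, y <- T].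

Lemma in_span_commgr y wb : y \in T -> all (mem T) wb ->
  in_span act ws (mu [~ y, \prod_(z <- wb) z]%g).
Proof.
move=> yT; elim: wb => [|z wb IH] /=.
  by rewrite big_nil commg1 Mp_mu1 => _; exact: in_span0.
case/andP=> zT wbT; rewrite big_cons commgMJ Mp_muM; last exact/derJ/derR.
  apply: in_spanD; first exact: IH.
  rewrite Mp_muJ; last exact: derR.
  by apply/in_span_act/(in_span_mem Mp_act1)/allpairs_f.
exact: derR.
Qed.

Lemma in_span_commg wa wb : all (mem T) wa -> all (mem T) wb ->
  in_span act ws (mu [~ \prod_(z <- wa) z, \prod_(z <- wb) z]%g).
Proof.
elim: wa => [|y wa IH] /=.
  by rewrite big_nil comm1g Mp_mu1 => _ _; exact: in_span0.
case/andP=> yT waT wbT; rewrite big_cons commMgJ Mp_muM; last exact: derR.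
  apply: in_spanD; last exact: IH.
  by rewrite Mp_muJ; [apply/in_span_act/in_span_commgr | exact: derR].
exact/derJ/derR.
Qed.

End CommutatorGenerators.

Lemma Mp_finitely_generated : fin_generated G -> exists ws : seq V,
  (forall x, der x -> in_span act ws (mu x)) /\
  {in ws, forall w, exists2 x, der x & w = mu x}.
Proof.
move=> [S S_gen]; pose T := S ++ map (fun y => y^-1)%g S.
have wordT w : all (fun y => (y \in S) || (y^-1 \in S))%g w -> all (mem T) w.
  move=> /allP wS; apply/allP => y /wS /orP[yS|yS]; rewrite /= mem_cat ?yS //.
  by apply/orP; right; rewrite -[y]invgK; apply: map_f.
exists [seq mu [~ x, y]%g | x <- T, y <- T]; split; last first.
  by move=> w /allpairsP [[x y] [_ _ ->]]; exists [~ x, y]%g; first exact: derR.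
move=> _ [w ->]; elim: w => [|[a b] w IH]; first by rewrite big_nil Mp_mu1; exact: in_span0.
rewrite big_cons Mp_muM; [|exact: derR | by exists w].
apply: in_spanD => //=.
have [wa [waS ->]] := S_gen a; have [wb [wbS ->]] := S_gen b.
by apply: in_span_commg; apply: wordT.
Qed.

Lemma Mp_semilinear_hom (L : fieldType) (psi : galg F Q -> L) :
  fin_generated G -> galg_rmorph psi ->
  (forall t, annihilator act t -> psi t = 0) ->
  exists lam : G -> L,
    [/\ forall x y, der x -> der y -> lam (x * y)%g = lam x + lam y,
        forall g x, der x -> lam (x ^ g)%g = psi (gdelta F (pi g^-1)) * lam x &
        exists2 x0, der x0 & lam x0 != 0].
Proof.
move=> G_fg psi_rm ann_ker; have [ws [mu_ws ws_mu]] := Mp_finitely_generated G_fg.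
have [[t [pt t_ws]]|[f [f_sl [v0 [v0ws fv0]]]]] := killed_or_nonzero_semilinear
    Mp_act_linear Mp_actM Mp_act1 (abel_comm pi_abel) psi_rm ws.
  case/negP: pt; apply/eqP/ann_ker/Mp_annihilator => x dx.
  exact/t_ws/mu_ws.
have f0 := semilinear_on0 Mp_act1 psi_rm f_sl.
exists (fun x => f (mu x)); split.
- move=> x y dx dy; rewrite Mp_muM // -{1}[mu x](gact1l Mp_act1) f_sl; try exact: mu_ws.
  by rewrite galg_rmorph1 // mul1r.
- move=> g x dx; rewrite Mp_muJ // -abel_morphV // -(gact_delta act) -[gact _ _ _]addr0.
  rewrite f_sl ?f0 ?addr0 //; [exact: mu_ws | exact: in_span0].
have [//|lam0] := classic (exists2 x0, der x0 & f (mu x0) != 0).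
case/negP: fv0; apply/eqP; apply: (semilinear_on_eq0 _ _ _ psi_rm f_sl) v0ws.
- exact: Mp_act_linear.
- exact: Mp_actM.
- exact: Mp_act1.
move=> _ /ws_mu [x dx ->]; apply/eqP; apply: contraT => fx; case: lam0.
by exists x.
Qed.

End ModuleMp.

Section TwistedHomCocycle.
Variables (G : groupType) (L : fieldType) (xi lam : G -> L).
Hypothesis xi_char : is_character xi.
Hypothesis xi_der : forall x, in_derived x -> xi x = 1.
Hypothesis lamM :
  forall x y, in_derived x -> in_derived y -> lam (x * y)%g = lam x + lam y.
Hypothesis lamJ : forall g x, in_derived x -> lam (x ^ g)%g = xi g^-1%g * lam x.

Lemma characterM x y : xi (x * y)%g = xi x * xi y.
Proof. by case: xi_char. Qed.

Lemma characterVK g : xi g^-1%g * xi g = 1.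
Proof. by rewrite -characterM mulVg; case: xi_char. Qed.

Lemma twisted_hom1 : lam 1%g = 0.
Proof. by apply: (@addrI _ (lam 1%g)); rewrite -lamM ?mulg1 ?addr0 //; exact: der1. Qed.

Lemma twisted_homV x : in_derived x -> lam x^-1%g = - lam x.
Proof.
move=> dx; apply/eqP; rewrite -addr_eq0 addrC -lamM ?mulgV ?twisted_hom1 //.
exact: derV.
Qed.

Definition commg_cocycle (a : G) (g : G) : L := xi g * lam [~ g, a]%g.

Lemma commg_cocycleP a : cocycle xi (commg_cocycle a).
Proof.
move=> g h; rewrite /commg_cocycle commMgJ lamM; [|exact/derJ/derR | exact: derR].
rewrite lamJ ?characterM; last exact: derR.
rewrite mulrDr !mulrA -[xi g * xi h * xi h^-1]mulrA [xi h * _]mulrC.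
by rewrite characterVK mulr1.
Qed.

(* On [G,G] the cocycle is (xi(a)^-1 - 1) lam, while coboundaries vanish there. *)
Lemma commg_cocycle_not_coboundary a x0 :
  xi a != 1 -> in_derived x0 -> lam x0 != 0 -> ~ coboundary xi (commg_cocycle a).
Proof.
move=> xia dx0 lam_x0 [m cob]; move: (cob x0).
rewrite /commg_cocycle xi_der // subrr mulr0 mul1r commgEl.
rewrite lamM ?twisted_homV ?lamJ //; [|exact: derV | exact: derJ].
move/eqP; rewrite addrC -{2}(mul1r (lam x0)) -mulrBl mulf_eq0 subr_eq0 (negbTE lam_x0).
rewrite orbF => /eqP xiV1; case/negP: xia.
by apply/eqP; rewrite -(characterVK a) xiV1 mul1r.
Qed.

Lemma H1_nonzero_of_twisted_hom :
  (exists a, xi a != 1) -> (exists2 x0, in_derived x0 & lam x0 != 0) -> H1_nonzero xi.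
Proof.
move=> [a xia] [x0 dx0 lam_x0]; exists (commg_cocycle a); split.
  exact: commg_cocycleP.
exact: commg_cocycle_not_coboundary xia dx0 lam_x0.
Qed.

End TwistedHomCocycle.

Unset Implicit Arguments.
Set Strict Implicit.

Theorem lemma9
  (G : groupType) (p : nat)
  (Q : groupType) (pi : G -> Q)
  (V : lmodType (Fp p)) (mu : G -> V) (act : Q -> V -> V)
  (K : fieldType) (chi : G -> K) (phi : galg (Fp p) Q -> K)
  (P : galg (Fp p) Q -> Prop)
  (L : fieldType) (psi : galg (Fp p) Q -> L) :
  fin_generated G ->
  (p = 0%N \/ prime p) ->
  is_abelianization pi ->
  is_Mp mu -> is_Mp_action pi mu act ->
  has_char K p ->
  in_E1 chi -> (exists g : G, chi g != 1) ->
  galg_rmorph phi -> (forall g : G, phi (gdelta (Fp p) (pi g)) = chi g) ->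
  minimal_prime_over (annihilator act) P ->
  (forall f, P f -> phi f = 0) ->
  galg_rmorph psi -> (forall f, psi f = 0 <-> P f) ->
  (forall y : L, exists a b, psi b != 0 /\ y = psi a / psi b) ->
  in_E1 (fun g : G => psi (gdelta (Fp p) (pi g))).
Proof.
move=> G_fg _ pi_abel mu_Mp act_Mp _ _ [g1 chi_g1] phi_rm phi_chi [_ ann_P _]
  P_ker psi_rm psiP _.
have xi_char := abel_character pi_abel psi_rm.
have [lam [lamM lamJ lam_nz]] := Mp_semilinear_hom pi_abel mu_Mp act_Mp G_fg psi_rm
  (fun t ann_t => proj2 (psiP t) (ann_P t ann_t)).
split=> //; apply: (H1_nonzero_of_twisted_hom xi_char _ lamM lamJ _ lam_nz).
  by move=> x dx; rewrite (abel_der pi_abel dx) galg_rmorph1.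
apply: NNPP => xi_triv; case/negP: chi_g1; rewrite -phi_chi.
apply/eqP/(ker_subset_delta_eq1 phi_rm psi_rm) => [f /psiP /P_ker //|].
by apply/eqP; apply: contraT => xi_g1; case: xi_triv; exists g1.
Qed.
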